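(* The necessary optimality (stationarity) conditions of $\mathcal J^{\mathrm{dir},1}_d$ with respect to all its variables and those of $\tilde{\mathcal J}^{\mathcal E}_d$ with respect to $(y_0,\dots,y_N,U_d^{(1)},U_d^{(2)},\mu,\nu)$ are equivalent, under the identification $\lambda_k=\lambda^v_k$ for $k=1,\dots,N-1$ (with $\lambda^q$ and $v$ determined by $\lambda^q_{k+1}=(\lambda^v_k-\lambda^v_{k+1})/h$ and the discrete first-order dynamics).
   Context: Setting: $\mathcal Q=\mathbb R^n$, controls in $\mathbb R^m$; smooth $f(q,v)\in\mathbb R^n$, $\rho(q)\in\mathbb R^{n\times m}$, $\mathrm g(q)$ symmetric positive definite, terminal cost $\phi(q,v)$; $q^0,\dot q^0$, $h=T/N$; parameters $\alpha,\gamma\in[0,1]$. Notation: $\bar q_k^\gamma=\gamma q_k+(1-\gamma)q_{k+1}$, $\Delta q_k=(q_{k+1}-q_k)/h$, $f_k^\gamma=f(\bar q_k^\gamma,\Delta q_k)$, $\rho_k^\gamma=\rho(\bar q_k^\gamma)$, $\mathrm g_k^\gamma=\mathrm g(\bar q_k^\gamma)$, $F_k^{(1)}=f_k^\gamma+\rho_k^\gamma U_k^{(1)}$, $F_k^{(2)}=f_k^{1-\gamma}+\rho_k^{1-\gamma}U_k^{(2)}$. Boundary velocities: $v_0^-=\Delta q_0-h\alpha\gamma F_0^{(1)}-h(1-\alpha)(1-\gamma)F_0^{(2)}$, $v_N^+=\Delta q_{N-1}+h\alpha(1-\gamma)F_{N-1}^{(1)}+h(1-\alpha)\gamma F_{N-1}^{(2)}$.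 Direct first-order objective in variables $q_0,\dots,q_N,v_0,\dots,v_N,\lambda^q_1,\dots,\lambda^q_N,\lambda^v_1,\dots,\lambda^v_N\in\mathbb R^n$, $U_k^{(1)},U_k^{(2)}\in\mathbb R^m$, $\mu,\nu$: $\mathcal J^{\mathrm{dir},1}_d=\phi(q_N,v_N)+\mu^\top(q_0-q^0)+\nu^\top(v_0-\dot q^0)+\frac h2\sum_{k=0}^{N-1}\big(\alpha U_k^{(1)\top}\mathrm g_k^\gamma U_k^{(1)}+(1-\alpha)U_k^{(2)\top}\mathrm g_k^{1-\gamma}U_k^{(2)}\big)+h\sum_{k=0}^{N-1}(\lambda^q_{k+1})^\top\big[\tfrac{q_{k+1}-q_k}h-v_k-h\alpha\gamma F_k^{(1)}-h(1-\alpha)(1-\gamma)F_k^{(2)}\big]+h\sum_{k=0}^{N-1}(\lambda^v_{k+1})^\top\big[\tfrac{v_{k+1}-v_k}h-\alpha F_k^{(1)}-(1-\alpha)F_k^{(2)}\big]$. Approximate control-dependent objective: with $y_k=(q_k,\lambda_k)$, $\Delta\lambda_k=(\lambda_{k+1}-\lambda_k)/h$, $\bar\lambda_k^\gamma=\gamma\lambda_k+(1-\gamma)\lambda_{k+1}$, $\tilde L^{\mathcal E}_d(y_k,y_{k+1},U_k^{(1)},U_k^{(2)},h)=h[\alpha(\Delta\lambda_k^\top\Delta q_k+(\bar\lambda_k^\gamma)^\top F_k^{(1)}-\frac12U_k^{(1)\top}\mathrm g_k^\gamma U_k^{(1)})+(1-\alpha)(\Delta\lambda_k^\top\Delta q_k+(\bar\lambda_k^{1-\gamma})^\top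 F_k^{(2)}-\frac12U_k^{(2)\top}\mathrm g_k^{1-\gamma}U_k^{(2)})]$ and $\tilde{\mathcal J}^{\mathcal E}_d=\phi(q_N,v_N^+)+\mu^\top(q_0-q^0)+\nu^\top(v_0^--\dot q^0)+\lambda_N^\top v_N^+-\lambda_0^\top v_0^--\sum_{k=0}^{N-1}\tilde L^{\mathcal E}_d(y_k,y_{k+1},U_k^{(1)},U_k^{(2)},h)$. *)

From HB Require Import structures.
From mathcomp Require Import all_boot all_order all_algebra.
From mathcomp Require Import all_classical all_reals all_analysis.
Set Implicit Arguments. Unset Strict Implicit. Unset Printing Implicit Defensive.
Import Order.TTheory GRing.Theory Num.Theory.
Import numFieldNormedType.Exports.
Local Open Scope ring_scope.

Definition dotv {R : comRingType} {n : nat} (u v : 'cV[R]_n) : R :=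
  \sum_(i < n) u i 0 * v i 0.

Definition quadf {R : comRingType} {m : nat} (U : 'cV[R]_m) (G : 'M[R]_m) : R :=
  dotv U (G *m U).

Fixpoint Ck {R : realType} {V W : normedModType R} (k : nat) (F : V -> W) : Prop :=
  match k with
  | 0 => continuous F
  | k'.+1 => (forall x, differentiable F x) /\ (forall v : V, Ck k' (fun x => 'D_v F x))
  end.
Definition smooth {R : realType} {V W : normedModType R} (F : V -> W) : Prop :=
  forall k, Ck k F.

Definition sym_posdef {R : realType} {m : nat} (G : 'M[R]_m) : Prop :=
  G^T = G /\ forall U : 'cV[R]_m, U != 0 -> 0 < quadf U G.

Definition pert {R : ringType} {V : lmodType R} (x dx : nat -> V) (t : R) : nat -> V :=
  fun k => x k + t *: dx k.

Section DiscreteOCP.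
Variables (R : realType) (n m : nat).
Variables (f : 'cV[R]_n -> 'cV[R]_n -> 'cV[R]_n)
          (rho : 'cV[R]_n -> 'M[R]_(n, m))
          (g : 'cV[R]_n -> 'M[R]_m)
          (phi : 'cV[R]_n -> 'cV[R]_n -> R)
          (q0 dq0 : 'cV[R]_n) (h alpha gamma : R) (N : nat).

Definition qbar (q : nat -> 'cV[R]_n) (c : R) (k : nat) : 'cV[R]_n :=
  c *: q k + (1 - c) *: q k.+1.
Definition Dq (q : nat -> 'cV[R]_n) (k : nat) : 'cV[R]_n := h^-1 *: (q k.+1 - q k).

Definition F1 (q : nat -> 'cV[R]_n) (U1 : nat -> 'cV[R]_m) (k : nat) : 'cV[R]_n :=
  f (qbar q gamma k) (Dq q k) + rho (qbar q gamma k) *m U1 k.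
Definition F2 (q : nat -> 'cV[R]_n) (U2 : nat -> 'cV[R]_m) (k : nat) : 'cV[R]_n :=
  f (qbar q (1 - gamma) k) (Dq q k) + rho (qbar q (1 - gamma) k) *m U2 k.

Definition v0minus q U1 U2 : 'cV[R]_n :=
  Dq q 0 - (h * alpha * gamma) *: F1 q U1 0
         - (h * (1 - alpha) * (1 - gamma)) *: F2 q U2 0.
Definition vNplus q U1 U2 : 'cV[R]_n :=
  Dq q N.-1 + (h * alpha * (1 - gamma)) *: F1 q U1 N.-1
            + (h * (1 - alpha) * gamma) *: F2 q U2 N.-1.

(* direct first-order objective J^{dir,1}_d; lq k, lv k are lambda^q_k, lambda^v_k
   (only indices 1..N are used) *)
Definition Jdir1 (q v lq lv : nat -> 'cV[R]_n) (U1 U2 : nat -> 'cV[R]_m)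
    (mu nu : 'cV[R]_n) : R :=
  phi (q N) (v N) + dotv mu (q 0 - q0) + dotv nu (v 0 - dq0)
  + h / 2 * \sum_(k < N) (alpha * quadf (U1 k) (g (qbar q gamma k))
                          + (1 - alpha) * quadf (U2 k) (g (qbar q (1 - gamma) k)))
  + h * \sum_(k < N) dotv (lq k.+1)
          (Dq q k - v k - (h * alpha * gamma) *: F1 q U1 k
                   - (h * (1 - alpha) * (1 - gamma)) *: F2 q U2 k)
  + h * \sum_(k < N) dotv (lv k.+1)
          (h^-1 *: (v k.+1 - v k) - alpha *: F1 q U1 k - (1 - alpha) *: F2 q U2 k).

Definition Ltilde (q lam : nat -> 'cV[R]_n) (U1 U2 : nat -> 'cV[R]_m) (k : nat) : R :=
  let Dl := h^-1 *: (lam k.+1 - lam k) in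
  let lbar c := c *: lam k + (1 - c) *: lam k.+1 in
  h * (alpha * (dotv Dl (Dq q k) + dotv (lbar gamma) (F1 q U1 k)
                - 2^-1 * quadf (U1 k) (g (qbar q gamma k)))
       + (1 - alpha) * (dotv Dl (Dq q k) + dotv (lbar (1 - gamma)) (F2 q U2 k)
                - 2^-1 * quadf (U2 k) (g (qbar q (1 - gamma) k)))).

Definition JtildeE (q lam : nat -> 'cV[R]_n) (U1 U2 : nat -> 'cV[R]_m)
    (mu nu : 'cV[R]_n) : R :=
  phi (q N) (vNplus q U1 U2) + dotv mu (q 0 - q0) + dotv nu (v0minus q U1 U2 - dq0)
  + dotv (lam N) (vNplus q U1 U2) - dotv (lam 0) (v0minus q U1 U2)
  - \sum_(k < N) Ltilde q lam U1 U2 k.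

Definition stationary_dir1 q v lq lv U1 U2 mu nu : Prop :=
  forall (dq dv dlq dlv : nat -> 'cV[R]_n) (dU1 dU2 : nat -> 'cV[R]_m)
         (dmu dnu : 'cV[R]_n),
    is_derive (0 : R) (1 : R)
      (fun t : R => Jdir1 (pert q dq t) (pert v dv t) (pert lq dlq t) (pert lv dlv t)
                          (pert U1 dU1 t) (pert U2 dU2 t) (mu + t *: dmu) (nu + t *: dnu))
      0.

Definition stationary_tildeE q lam U1 U2 mu nu : Prop :=
  forall (dq dlam : nat -> 'cV[R]_n) (dU1 dU2 : nat -> 'cV[R]_m) (dmu dnu : 'cV[R]_n),
    is_derive (0 : R) (1 : R)
      (fun t : R => JtildeE (pert q dq t) (pert lam dlam t)
                            (pert U1 dU1 t) (pert U2 dU2 t) (mu + t *: dmu) (nu + t *: dnu))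
      0.

End DiscreteOCP.

(* Along the discrete dynamics, i.e. when v_k is the [velocity] determined by q and the
   controls, J^{dir,1}_d coincides with J~^E_d evaluated at lambda = lambda^v: in general
   the two differ by a [penalty] made of a difference of terminal costs and of a pairing
   of the multipliers with the defects v_k - velocity_k.  Stationarity with respect to
   lambda^q and lambda^v forces v onto the dynamics, so the first variation of the
   penalty vanishes and the first variations of the two objectives agree.  Conversely,
   at a stationary point of J~^E one puts v on the dynamics and takes lambda^q, lambda^v
   solving the discrete adjoint equations; summation by parts then makes the first
   variation of the penalty vanish.  Since J~^E only sees lambda_1, ..., lambda_{N-1},
   the multipliers can be identified on these indices. *)

From Pilot Require Import Defs.
From HB Require Import structures.
From mathcomp Require Import all_boot all_order all_algebra.
From mathcomp Require Import all_classical all_reals all_analysis.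
From mathcomp Require Import ring lra.
Import Order.TTheory GRing.Theory Num.Theory.
Import numFieldNormedType.Exports.
Local Open Scope ring_scope.

Section DotProduct.
Context {R : comNzRingType} {n : nat}.
Implicit Types u v w : 'cV[R]_n.

Lemma dotvDl u w v : dotv (u + w) v = dotv u v + dotv w v.
Proof. by rewrite /dotv -big_split; apply: eq_bigr => i _; rewrite mxE mulrDl. Qed.
Lemma dotvDr u w v : dotv v (u + w) = dotv v u + dotv v w.
Proof. by rewrite /dotv -big_split; apply: eq_bigr => i _; rewrite mxE mulrDr. Qed.
Lemma dotvNl u v : dotv (- u) v = - dotv u v.
Proof. by rewrite /dotv -sumrN; apply: eq_bigr => i _; rewrite mxE mulNr. Qed.
Lemma dotvNr u v : dotv v (- u) = - dotv v u.
Proof. by rewrite /dotv -sumrN; apply: eq_bigr => i _; rewrite mxE mulrN. Qed.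
Lemma dotvZl (c : R) u v : dotv (c *: u) v = c * dotv u v.
Proof. by rewrite /dotv mulr_sumr; apply: eq_bigr => i _; rewrite mxE mulrA. Qed.
Lemma dotvZr (c : R) u v : dotv v (c *: u) = c * dotv v u.
Proof. by rewrite /dotv mulr_sumr; apply: eq_bigr => i _; rewrite mxE mulrCA. Qed.
Lemma dotv0l v : dotv 0 v = 0.
Proof. by rewrite /dotv big1 // => i _; rewrite mxE mul0r. Qed.
Lemma dotv0r v : dotv v 0 = 0.
Proof. by rewrite /dotv big1 // => i _; rewrite mxE mulr0. Qed.

Lemma linear_dotv_repr (L : 'cV[R]_n -> R) :
  {morph L : a b / a + b} -> (forall (c : R) a, L (c *: a) = c * L a) ->
  exists G, forall x, dotv G x = L x.
Proof.
move=> LD LZ; exists (\col_i L (delta_mx i 0)) => x.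
have L0 : L 0 = 0 by rewrite -(scale0r (0 : 'cV[R]_n)) LZ mul0r.
rewrite [in RHS](matrix_sum_delta x) (big_morph L LD L0) /dotv.
apply: eq_bigr => i _; rewrite (big_morph L LD L0) big_ord1 LZ mxE mulrC.
by rewrite (ord1 (0 : 'I_1)).
Qed.

End DotProduct.

Definition dotvE :=
  (@dotvDl, @dotvDr, @dotvNl, @dotvNr, @dotvZl, @dotvZr, @dotv0l, @dotv0r).

Lemma dotvv_eq0 {R : realDomainType} {n : nat} {v : 'cV[R]_n} :
  dotv v v = 0 -> v = 0.
Proof.
move=> /eqP; rewrite /dotv psumr_eq0; last by move=> i _; rewrite -expr2 sqr_ge0.
move=> /allP vi0; apply/matrixP => i j; rewrite mxE (ord1 j).
by apply/eqP; rewrite -sqrf_eq0 expr2 (eqP (vi0 i (mem_index_enum _))).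
Qed.

Lemma sum_dotv_eq0 {R : realDomainType} {n N : nat} {X : nat -> 'cV[R]_n} :
  (forall d : nat -> 'cV[R]_n, \sum_(k < N) dotv (d k.+1) (X k) = 0) ->
  forall k, (k < N)%N -> X k = 0.
Proof.
move=> sum0 k kN; apply: dotvv_eq0.
have := sum0 (fun j => if j == k.+1 then X k else 0).
rewrite (bigD1 (Ordinal kN)) //= eqxx big1 ?addr0 // => j /eqP jk.
rewrite eqSS; case: eqP => [jk' | _]; last exact: dotv0l.
by case: jk; apply: val_inj.
Qed.

Section Curves.
Context {R : realType}.
Implicit Types X Y : normedModType R.

Lemma is_derive_line {X} (a b : X) (t0 : R) :
  is_derive t0 1 (fun t : R => a + t *: b) b.
Proof.
have db : differentiable (fun t : R => t *: b) t0 by have [] := is_diff_scalel t0 b.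
have dl : differentiable (fun t : R => a + t *: b) t0 by exact: differentiableD.
apply: DeriveDef; first exact: diff_derivable.
rewrite deriveE // diffD // diff_cst /=.
have -> : 'd ( *:%R^~ b) t0 = ( *:%R^~ b) :> (R -> X) by rewrite diff_val.
by rewrite add0r scale1r.
Qed.

Lemma derivable_line {X} (a b : X) (t0 : R) :
  derivable (fun t : R => a + t *: b) t0 1.
Proof. by have [] := is_derive_line a b t0. Qed.

Lemma is_derive_line_uniq {X} {a b d : X} {t0 : R} :
  is_derive t0 1 (fun t : R => a + t *: b) d -> d = b.
Proof. by move/@derive_val <-; exact: (@derive_val _ _ _ _ _ _ _ (is_derive_line a b t0)). Qed.

Lemma is_derive_diff_comp {X Y} {F : X -> Y} {c : R -> X} {t0 : R} :
  differentiable F (c t0) -> derivable c t0 1 ->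
  is_derive t0 1 (fun t => F (c t)) ('d F (c t0) ('D_1 c t0)).
Proof.
move=> dF /derivable1_diffP dc.
have dFc : differentiable (F \o c) t0 by exact: differentiable_comp.
apply: DeriveDef; first exact: diff_derivable.
by rewrite (deriveE _ dFc) diff_comp // /= (deriveE _ dc).
Qed.

Lemma is_derive_pair {X Y} {a : R -> X} {b : R -> Y} {t0 : R} :
  derivable a t0 1 -> derivable b t0 1 ->
  is_derive t0 1 (fun t => (a t, b t)) ('D_1 a t0, 'D_1 b t0).
Proof.
move=> /derivable1_diffP da /derivable1_diffP db.
have dp : differentiable (fun t => (a t, b t)) t0 by exact: differentiable_pair.
apply: DeriveDef; first exact: diff_derivable.
by rewrite (deriveE _ dp) diff_pair // (deriveE _ da) (deriveE _ db).
Qed.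

Lemma derivable_diff_comp {X Y} {F : X -> Y} {c : R -> X} {t0 : R} :
  differentiable F (c t0) -> derivable c t0 1 -> derivable (fun t => F (c t)) t0 1.
Proof. by move=> dF dc; have [] := is_derive_diff_comp dF dc. Qed.

Lemma derivable_pair {X Y} {a : R -> X} {b : R -> Y} {t0 : R} :
  derivable a t0 1 -> derivable b t0 1 -> derivable (fun t => (a t, b t)) t0 1.
Proof. by move=> da db; have [] := is_derive_pair da db. Qed.

Lemma derivable_mulmx {p r s} {A : R -> 'M[R]_(p, r)} {B : R -> 'M[R]_(r, s)} {t0 : R} :
  derivable A t0 1 -> derivable B t0 1 -> derivable (fun t => A t *m B t) t0 1.
Proof.
move=> /derivable_mxP dA /derivable_mxP dB; apply/derivable_mxP => i j.
have -> : (fun t => (A t *m B t) i j) = \sum_(k < r) (fun t => A t i k * B t k j).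
  by apply/funext => t; rewrite mxE fct_sumE.
by apply: derivable_sum => k; apply: derivableM.
Qed.

Lemma is_derive_dotv {p} {a b : R -> 'cV[R]_p} {t0 : R} :
  derivable a t0 1 -> derivable b t0 1 ->
  is_derive t0 1 (fun t => dotv (a t) (b t))
    (dotv ('D_1 a t0) (b t0) + dotv (a t0) ('D_1 b t0)).
Proof.
move=> da db; have /derivable_mxP dai := da; have /derivable_mxP dbi := db.
have -> : (fun t => dotv (a t) (b t)) = \sum_(k < p) (fun t => a t k 0 * b t k 0).
  by apply/funext => t; rewrite /dotv fct_sumE.
rewrite /dotv -big_split /= (derive_mx da) (derive_mx db).
apply: is_derive_sum => k; rewrite !mxE.
apply: is_derive_eq (is_deriveM (derivableP (dai k 0)) (derivableP (dbi k 0))) _.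
by rewrite addrC [b t0 k 0 *: _]mulrC.
Qed.

Lemma is_derive_dotv_vanishing {p} {a e : R -> 'cV[R]_p} {t0 : R} :
  derivable a t0 1 -> derivable e t0 1 -> e t0 = 0 ->
  is_derive t0 1 (fun t => dotv (a t) (e t)) (dotv (a t0) ('D_1 e t0)).
Proof.
move=> da de e0; apply: is_derive_eq (is_derive_dotv da de) _.
by rewrite e0 dotv0r add0r.
Qed.

Lemma is_derive_diff_compB {X Y Z : normedModType R} {P : X * Y -> Z} {x : R -> X}
    {y z : R -> Y} {t0 : R} :
  differentiable P (x t0, y t0) -> derivable x t0 1 -> derivable y t0 1 ->
  derivable z t0 1 -> y t0 = z t0 ->
  is_derive t0 1 (fun t => P (x t, y t) - P (x t, z t))
    ('d P (x t0, y t0) (0, 'D_1 y t0 - 'D_1 z t0)).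
Proof.
move=> dP dx dy dz yz.
have dPy := is_derive_diff_comp dP (derivable_pair dx dy).
have dPz : differentiable P (x t0, z t0) by rewrite -yz.
have {}dPz := is_derive_diff_comp dPz (derivable_pair dx dz).
apply: is_derive_eq (is_deriveB dPy dPz) _.
rewrite -yz -linearB /= (@derive_val _ _ _ _ _ _ _ (is_derive_pair dx dy)).
rewrite (@derive_val _ _ _ _ _ _ _ (is_derive_pair dx dz)).
by congr ('d P _ _); congr pair; rewrite /= subrr.
Qed.

Lemma is_derive_sumf {X} {p : nat} {F : 'I_p -> R -> X} {dF : 'I_p -> X} {t0 : R} :
  (forall k, is_derive t0 1 (F k) (dF k)) ->
  is_derive t0 1 (fun t => \sum_(k < p) F k t) (\sum_(k < p) dF k).
Proof.
have -> : (fun t => \sum_(k < p) F k t) = \sum_(k < p) F k.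
  by apply/funext => t; rewrite fct_sumE.
exact: is_derive_sum.
Qed.

Lemma is_derive_ext {X} {F G : R -> X} {t0 : R} {d : X} :
  (forall t, F t = G t) -> is_derive t0 1 G d -> is_derive t0 1 F d.
Proof. by move=> /funext ->. Qed.

End Curves.

Lemma smooth_differentiable {R : realType} {V W : normedModType R} {F : V -> W} :
  smooth F -> forall x, differentiable F x.
Proof. by move=> /(_ 1%N) []. Qed.

Lemma pertx0 {R : nzRingType} {V : lmodType R} (x : nat -> V) (t : R) :
  pert x (fun _ => 0) t = x.
Proof. by apply/funext => k; rewrite /pert scaler0 addr0. Qed.

Section DiscreteOCP.
Context {R : realType} {n m : nat}
  {f : 'cV[R]_n -> 'cV[R]_n -> 'cV[R]_n} {rho : 'cV[R]_n -> 'M[R]_(n, m)}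
  {g : 'cV[R]_n -> 'M[R]_m} {phi : 'cV[R]_n -> 'cV[R]_n -> R}
  {q0 dq0 : 'cV[R]_n} {h alpha gamma : R} {N : nat}.
Hypothesis N_gt0 : (0 < N)%N.
Hypothesis h_neq0 : h != 0.

Local Notation Dq := (Dq h).
Local Notation F1 := (F1 f rho h gamma).
Local Notation F2 := (F2 f rho h gamma).
Local Notation Jdir1 := (Jdir1 f rho g phi q0 dq0 h alpha gamma N).
Local Notation JtildeE := (JtildeE f rho g phi q0 dq0 h alpha gamma N).
Local Notation Ltilde := (Ltilde f rho g h alpha gamma).
Local Notation vNplus := (vNplus f rho h alpha gamma N).

Definition velocity q U1 U2 k : 'cV[R]_n :=
  if (k < N)%N then Dq q k - (h * alpha * gamma) *: F1 q U1 k
                     - (h * (1 - alpha) * (1 - gamma)) *: F2 q U2 k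
  else vNplus q U1 U2.

Lemma velocityE q U1 U2 k : (k < N)%N ->
  velocity q U1 U2 k = Dq q k - (h * alpha * gamma) *: F1 q U1 k
                       - (h * (1 - alpha) * (1 - gamma)) *: F2 q U2 k.
Proof. by rewrite /velocity => ->. Qed.

Lemma velocityN q U1 U2 : velocity q U1 U2 N = vNplus q U1 U2.
Proof. by rewrite /velocity ltnn. Qed.

Lemma velocity0 q U1 U2 : velocity q U1 U2 0 = v0minus f rho h alpha gamma q U1 U2.
Proof. by rewrite velocityE. Qed.

Definition q_residual q v U1 U2 k : 'cV[R]_n :=
  Dq q k - v k - (h * alpha * gamma) *: F1 q U1 k
  - (h * (1 - alpha) * (1 - gamma)) *: F2 q U2 k.

Definition v_residual q v U1 U2 k : 'cV[R]_n :=
  h^-1 *: (v k.+1 - v k) - alpha *: F1 q U1 k - (1 - alpha) *: F2 q U2 k.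

Lemma Jdir1_pert_lq (q v lq dlq lv : nat -> 'cV[R]_n) (U1 U2 : nat -> 'cV[R]_m)
    (mu nu : 'cV[R]_n) (t : R) :
  Jdir1 q v (pert lq dlq t) lv U1 U2 mu nu = Jdir1 q v lq lv U1 U2 mu nu
    + t * (h * \sum_(k < N) dotv (dlq k.+1) (q_residual q v U1 U2 k)).
Proof.
rewrite /Jdir1 /pert.
set X := q_residual q v U1 U2.
have -> : \sum_(k < N) dotv (lq k.+1 + t *: dlq k.+1) (X k) =
    \sum_(k < N) dotv (lq k.+1) (X k) + t * \sum_(k < N) dotv (dlq k.+1) (X k).
  by rewrite mulr_sumr -big_split; apply: eq_bigr => k _; rewrite dotvDl dotvZl.
ring.
Qed.

Lemma Jdir1_pert_lv (q v lq lv dlv : nat -> 'cV[R]_n) (U1 U2 : nat -> 'cV[R]_m)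
    (mu nu : 'cV[R]_n) (t : R) :
  Jdir1 q v lq (pert lv dlv t) U1 U2 mu nu = Jdir1 q v lq lv U1 U2 mu nu
    + t * (h * \sum_(k < N) dotv (dlv k.+1) (v_residual q v U1 U2 k)).
Proof.
rewrite /Jdir1 /pert.
set X := v_residual q v U1 U2.
have -> : \sum_(k < N) dotv (lv k.+1 + t *: dlv k.+1) (X k) =
    \sum_(k < N) dotv (lv k.+1) (X k) + t * \sum_(k < N) dotv (dlv k.+1) (X k).
  by rewrite mulr_sumr -big_split; apply: eq_bigr => k _; rewrite dotvDl dotvZl.
ring.
Qed.

Lemma stationary_dir1_residuals {q v lq lv : nat -> 'cV[R]_n}
    {U1 U2 : nat -> 'cV[R]_m} {mu nu : 'cV[R]_n} :
  stationary_dir1 f rho g phi q0 dq0 h alpha gamma N q v lq lv U1 U2 mu nu ->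
  (forall k, (k < N)%N -> q_residual q v U1 U2 k = 0) /\
  (forall k, (k < N)%N -> v_residual q v U1 U2 k = 0).
Proof.
move=> st.
have slope_eq0 (a : R) (J : R -> R) (S : R) :
    is_derive (0 : R) (1 : R) J 0 -> (forall t, J t = a + t * (h * S)) -> S = 0.
  move=> + /funext JE; rewrite JE => /is_derive_line_uniq /esym /eqP.
  by rewrite mulf_eq0 (negbTE h_neq0) => /eqP.
split; apply: sum_dotv_eq0 => d.
- move: (st (fun _ => 0) (fun _ => 0) d (fun _ => 0) (fun _ => 0) (fun _ => 0) 0 0).
  move/(slope_eq0 (Jdir1 q v lq lv U1 U2 mu nu)); apply=> t /=.
  by rewrite !pertx0 !scaler0 !addr0 Jdir1_pert_lq.
- move: (st (fun _ => 0) (fun _ => 0) (fun _ => 0) d (fun _ => 0) (fun _ => 0) 0 0).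
  move/(slope_eq0 (Jdir1 q v lq lv U1 U2 mu nu)); apply=> t /=.
  by rewrite !pertx0 !scaler0 !addr0 Jdir1_pert_lv.
Qed.

Lemma stationary_dir1_velocity {q v lq lv : nat -> 'cV[R]_n}
    {U1 U2 : nat -> 'cV[R]_m} {mu nu : 'cV[R]_n} :
  stationary_dir1 f rho g phi q0 dq0 h alpha gamma N q v lq lv U1 U2 mu nu ->
  forall k, (k <= N)%N -> v k = velocity q U1 U2 k.
Proof.
case/stationary_dir1_residuals => qres vres.
have v_lt k : (k < N)%N -> v k = velocity q U1 U2 k.
  move=> kN; move: (qres k kN); rewrite /q_residual velocityE //.
  move: (Dq q k) (F1 q U1 k) (F2 q U2 k) => d A B /matrixP r0.
  by apply/matrixP => i j; move: (r0 i j); rewrite !mxE; lra.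
move=> k; rewrite leq_eqVlt => /orP [/eqP -> | ]; last exact: v_lt.
have [N' eN] : exists N', N = N'.+1 by exists N.-1; rewrite prednK.
have N'N : (N' < N)%N by rewrite eN.
move: (vres N' N'N) (v_lt N' N'N); rewrite velocityN /vNplus /v_residual velocityE //.
rewrite eN /=; move: (Dq q N') (F1 q U1 N') (F2 q U2 N') => d A B /matrixP r0 /matrixP vN'.
apply/matrixP => i j; move: (r0 i j) (vN' i j); rewrite !mxE.
move: (v N'.+1 i j) (v N' i j) (d i j) (A i j) (B i j) => x y d' a b r0' y_eq.
have step : h^-1 * (x - y) = alpha * a + (1 - alpha) * b by lra.
have -> : x = y + h * (h^-1 * (x - y)) by field.
by rewrite step y_eq; ring.
Qed.

Definition defect_form (L : 'cV[R]_n -> R) (nu : 'cV[R]_n) (lq lv w : nat -> 'cV[R]_n) : R :=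
  L (w N) + dotv nu (w 0%N) - h * \sum_(k < N) dotv (lq k.+1) (w k)
  + \sum_(k < N) dotv (lv k.+1) (w k.+1 - w k).

Definition penalty q v lq lv U1 U2 (nu : 'cV[R]_n) : R :=
  phi (q N) (v N) - phi (q N) (velocity q U1 U2 N)
  + defect_form (fun _ => 0) nu lq lv (fun k => v k - velocity q U1 U2 k).

Lemma Jdir1_step (q v lq lv : nat -> 'cV[R]_n) (U1 U2 : nat -> 'cV[R]_m) k :
  (k < N)%N ->
  h / 2 * (alpha * quadf (U1 k) (g (qbar q gamma k))
           + (1 - alpha) * quadf (U2 k) (g (qbar q (1 - gamma) k)))
  + h * dotv (lq k.+1) (q_residual q v U1 U2 k)
  + h * dotv (lv k.+1) (v_residual q v U1 U2 k)
  = - Ltilde q lv U1 U2 k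
    + (dotv (lv k.+1) (velocity q U1 U2 k.+1) - dotv (lv k) (velocity q U1 U2 k))
    - h * dotv (lq k.+1) (v k - velocity q U1 U2 k)
    + dotv (lv k.+1) ((v k.+1 - velocity q U1 U2 k.+1) - (v k - velocity q U1 U2 k)).
Proof.
by move=> kN; rewrite /Ltilde /q_residual /v_residual (velocityE q U1 U2 k kN) /= !dotvE; field.
Qed.

Lemma Jdir1E (q v lq lv : nat -> 'cV[R]_n) (U1 U2 : nat -> 'cV[R]_m) (mu nu : 'cV[R]_n) :
  Jdir1 q v lq lv U1 U2 mu nu =
  phi (q N) (v N) + dotv mu (q 0 - q0) + dotv nu (v 0 - dq0)
  + \sum_(k < N) (h / 2 * (alpha * quadf (U1 k) (g (qbar q gamma k))
                           + (1 - alpha) * quadf (U2 k) (g (qbar q (1 - gamma) k)))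
                  + h * dotv (lq k.+1) (q_residual q v U1 U2 k)
                  + h * dotv (lv k.+1) (v_residual q v U1 U2 k)).
Proof.
rewrite /Jdir1 /q_residual /v_residual [in RHS]big_split [in RHS]big_split /=.
by rewrite -!mulr_sumr !addrA.
Qed.

Lemma Jdir1_split (q v lq lv : nat -> 'cV[R]_n) (U1 U2 : nat -> 'cV[R]_m)
    (mu nu : 'cV[R]_n) :
  Jdir1 q v lq lv U1 U2 mu nu = JtildeE q lv U1 U2 mu nu + penalty q v lq lv U1 U2 nu.
Proof.
have tel : \sum_(k < N) dotv (lv k.+1) (velocity q U1 U2 k.+1)
           + \sum_(k < N) - dotv (lv k) (velocity q U1 U2 k)
           = dotv (lv N) (velocity q U1 U2 N) - dotv (lv 0) (velocity q U1 U2 0).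
  rewrite -big_split.
  rewrite -(telescope_sumr (fun k => dotv (lv k) (velocity q U1 U2 k)) (leq0n N)) big_mkord.
  by apply: eq_bigr.
rewrite Jdir1E; under eq_bigr => k _ do rewrite (Jdir1_step q v lq lv U1 U2 k (ltn_ord k)).
rewrite !big_split /= tel /JtildeE /penalty /defect_form velocityN velocity0 !sumrN.
by rewrite -!mulr_sumr !dotvE; ring.
Qed.

Lemma penalty_velocity (q lq lv : nat -> 'cV[R]_n) (U1 U2 : nat -> 'cV[R]_m)
    (nu : 'cV[R]_n) :
  penalty q (velocity q U1 U2) lq lv U1 U2 nu = 0.
Proof.
rewrite /penalty /defect_form !subrr dotv0r !big1 => [|k _|k _].
- by rewrite mulr0 !(addr0, subr0).
- by rewrite !subrr dotv0r.
- by rewrite subrr dotv0r.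
Qed.

Lemma v_residual_velocity_last (q : nat -> 'cV[R]_n) (U1 U2 : nat -> 'cV[R]_m) :
  v_residual q (velocity q U1 U2) U1 U2 N.-1 = 0.
Proof.
have N1N : (N.-1 < N)%N by rewrite prednK.
rewrite /v_residual prednK // velocityN (velocityE q U1 U2 N.-1 N1N) /vNplus.
move: (Dq q N.-1) (F1 q U1 N.-1) (F2 q U2 N.-1) => d A B.
by apply/matrixP => i j; rewrite !mxE; field.
Qed.

Lemma Jdir1_interior (q lq lam lam' : nat -> 'cV[R]_n) (U1 U2 : nat -> 'cV[R]_m)
    (mu nu : 'cV[R]_n) :
  (forall k, (1 <= k <= N.-1)%N -> lam k = lam' k) ->
  Jdir1 q (velocity q U1 U2) lq lam U1 U2 mu nu =
  Jdir1 q (velocity q U1 U2) lq lam' U1 U2 mu nu.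
Proof.
move=> lam_eq; rewrite !Jdir1E; congr (_ + _); apply: eq_bigr => k _.
congr (_ + _ * _); case: (ltnP k N.-1) => [kN1 | kN1].
  by rewrite lam_eq.
have -> : (k : nat) = N.-1.
  by apply/eqP; rewrite eqn_leq kN1 andbT -ltnS prednK.
by rewrite v_residual_velocity_last !dotv0r.
Qed.

Lemma JtildeE_interior (q lam lam' : nat -> 'cV[R]_n) (U1 U2 : nat -> 'cV[R]_m)
    (mu nu : 'cV[R]_n) :
  (forall k, (1 <= k <= N.-1)%N -> lam k = lam' k) ->
  JtildeE q lam U1 U2 mu nu = JtildeE q lam' U1 U2 mu nu.
Proof.
move=> lam_eq.
have E l : JtildeE q l U1 U2 mu nu = Jdir1 q (velocity q U1 U2) (fun _ => 0) l U1 U2 mu nu.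
  by rewrite Jdir1_split penalty_velocity addr0.
by rewrite !E; apply: Jdir1_interior.
Qed.

Hypothesis f_diff : forall x, differentiable (fun p : 'cV[R]_n * 'cV[R]_n => f p.1 p.2) x.
Hypothesis rho_diff : forall x, differentiable rho x.
Hypothesis phi_diff : forall x, differentiable (fun p : 'cV[R]_n * 'cV[R]_n => phi p.1 p.2) x.

Definition velocity_curve (q dq : nat -> 'cV[R]_n) (U1 dU1 U2 dU2 : nat -> 'cV[R]_m)
    (k : nat) (t : R) : 'cV[R]_n :=
  velocity (pert q dq t) (pert U1 dU1 t) (pert U2 dU2 t) k.

Lemma derivable_velocity_curve (q dq : nat -> 'cV[R]_n) (U1 dU1 U2 dU2 : nat -> 'cV[R]_m)
    (k : nat) (t0 : R) :
  derivable (velocity_curve q dq U1 dU1 U2 dU2 k) t0 1.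
Proof.
have dDq j : derivable (fun t => Dq (pert q dq t) j) t0 1.
  by apply: derivableZ; apply: derivableB; exact: derivable_line.
have dqbar c j : derivable (fun t => qbar (pert q dq t) c j) t0 1.
  by apply: derivableD; apply: derivableZ; exact: derivable_line.
have dF c (U dU : nat -> 'cV[R]_m) j : derivable (fun t =>
    f (qbar (pert q dq t) c j) (Dq (pert q dq t) j)
    + rho (qbar (pert q dq t) c j) *m pert U dU t j) t0 1.
  apply: derivableD.
    exact: derivable_diff_comp (f_diff _) (derivable_pair (dqbar c j) (dDq j)).
  apply: derivable_mulmx; first exact: derivable_diff_comp (rho_diff _) (dqbar c j).
  exact: derivable_line (U j) (dU j) t0.
rewrite /velocity_curve /velocity /Defs.vNplus; case: (k < N)%N.
- by apply: derivableB; [apply: derivableB; [exact: dDq |] |]; apply: derivableZ; exact: dF.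
- by apply: derivableD; [apply: derivableD; [exact: dDq |] |]; apply: derivableZ; exact: dF.
Qed.

Lemma is_derive_defect_form {nu : R -> 'cV[R]_n} {lq lv e : nat -> R -> 'cV[R]_n} {t0 : R} :
  derivable nu t0 1 -> (forall k, derivable (lq k) t0 1) ->
  (forall k, derivable (lv k) t0 1) -> (forall k, derivable (e k) t0 1) ->
  (forall k, (k <= N)%N -> e k t0 = 0) ->
  is_derive t0 1
    (fun t => defect_form (fun _ => 0) (nu t) (lq^~ t) (lv^~ t) (e^~ t))
    (defect_form (fun _ => 0) (nu t0) (lq^~ t0) (lv^~ t0) (fun k => 'D_1 (e k) t0)).
Proof.
move=> dnu dlq dlv de e0.
have de1 k : derivable (fun t => e k.+1 t - e k t) t0 1 := derivableB (de k.+1) (de k).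
have De1 k : 'D_1 (fun t => e k.+1 t - e k t) t0 = 'D_1 (e k.+1) t0 - 'D_1 (e k) t0 :=
  deriveB (de k.+1) (de k).
have e10 (k : 'I_N) : e k.+1 t0 - e k t0 = 0 by rewrite !e0 ?subrr // ltnW.
have dS0 := is_derive_dotv_vanishing dnu (de 0%N) (e0 0%N (leq0n N)).
have dS1 := is_derive_sumf (fun k : 'I_N =>
  is_derive_dotv_vanishing (dlq k.+1) (de k) (e0 k (ltnW (ltn_ord k)))).
have dS2 := is_derive_sumf (fun k : 'I_N =>
  is_derive_dotv_vanishing (dlv k.+1) (de1 k) (e10 k)).
apply: is_derive_eq (is_deriveD (is_deriveB (is_deriveD (is_derive_cst 0 t0 1) dS0)
                                            (is_deriveZ h dS1)) dS2) _.
by rewrite /defect_form; congr (_ + _); apply: eq_bigr => k _; rewrite De1.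
Qed.

Lemma is_derive_penalty (q dq v dv lq dlq lv dlv : nat -> 'cV[R]_n)
    (U1 dU1 U2 dU2 : nat -> 'cV[R]_m) (nu dnu : 'cV[R]_n) :
  (forall k, (k <= N)%N -> v k = velocity q U1 U2 k) ->
  is_derive (0 : R) 1
    (fun t => penalty (pert q dq t) (pert v dv t) (pert lq dlq t) (pert lv dlv t)
                      (pert U1 dU1 t) (pert U2 dU2 t) (nu + t *: dnu))
    (defect_form (fun x => 'd (fun p : 'cV[R]_n * 'cV[R]_n => phi p.1 p.2) (q N, v N) (0, x))
       nu lq lv (fun k => dv k - 'D_1 (velocity_curve q dq U1 dU1 U2 dU2 k) 0)).
Proof.
move=> v_vel; set Vc := velocity_curve q dq U1 dU1 U2 dU2.
have line_at0 p (x dx : nat -> 'cV[R]_p) : (fun k => x k + 0 *: dx k) = x.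
  by apply/funext => k; rewrite scale0r addr0.
pose e k t := pert v dv t k - Vc k t.
have dVc k : derivable (Vc k) 0 1 := derivable_velocity_curve q dq U1 dU1 U2 dU2 k 0.
have de k : derivable (e k) 0 1 := derivableB (derivable_line (v k) (dv k) 0) (dVc k).
have e0 k : (k <= N)%N -> e k 0 = 0.
  by move=> kN; rewrite /e /Vc /velocity_curve /pert !line_at0 v_vel // scale0r addr0 subrr.
have Dline p (x dx : 'cV[R]_p) : 'D_1 (fun t : R => x + t *: dx) 0 = dx.
  exact: (@derive_val _ _ _ _ _ _ _ (is_derive_line x dx 0)).
have De k : 'D_1 (e k) 0 = dv k - 'D_1 (Vc k) 0.
  by rewrite deriveB // ?Dline //; exact: derivable_line.
have dphi := is_derive_diff_compB (phi_diff _) (derivable_line (q N) (dq N) 0)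
  (derivable_line (v N) (dv N) 0) (dVc N) (subr0_eq (e0 N (leqnn N))).
have ddef := is_derive_defect_form (derivable_line nu dnu 0)
  (fun k => derivable_line (lq k) (dlq k) 0) (fun k => derivable_line (lv k) (dlv k) 0) de e0.
apply: is_derive_eq (is_deriveD dphi ddef) _.
rewrite /= (line_at0 _ lq dlq) (line_at0 _ lv dlv) !scale0r !addr0 Dline (funext De).
by rewrite /defect_form add0r !addrA.
Qed.

Lemma defect_form0 (L : 'cV[R]_n -> R) (nu : 'cV[R]_n) (lq lv : nat -> 'cV[R]_n) :
  L 0 = 0 -> defect_form L nu lq lv (fun _ => 0) = 0.
Proof.
move=> L0; rewrite /defect_form L0 dotv0r !big1 => [|k _|k _]; rewrite ?subrr ?dotv0r //.
by rewrite mulr0 subr0 !addr0.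
Qed.

(* Summation by parts: the hypotheses are the discrete adjoint equations, under which
   every defect [w k] cancels. *)
Lemma defect_form_adjoint {G nu : 'cV[R]_n} {L : 'cV[R]_n -> R} {lq lv w : nat -> 'cV[R]_n} :
  (forall x, dotv G x = L x) -> lv N = - G -> lq 1%N = h^-1 *: (nu - lv 1%N) ->
  (forall k, (0 < k)%N -> lq k.+1 = h^-1 *: (lv k - lv k.+1)) ->
  defect_form L nu lq lv w = 0.
Proof.
move=> GL lvN lq1 lqS.
pose a k := if k == 0%N then dotv nu (w 0%N) else dotv (lv k) (w k).
have tel : \sum_(k < N) dotv (lv k.+1) (w k.+1 - w k) - h * \sum_(k < N) dotv (lq k.+1) (w k)
           = a N - a 0%N.
  rewrite mulr_sumr -sumrB -(telescope_sumr a (leq0n N)) big_mkord.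
  apply: eq_bigr => -[[|k] kN] _; rewrite /a /=; first by rewrite lq1 !dotvE; field.
  by rewrite lqS // !dotvE; field.
have -> : defect_form L nu lq lv w = L (w N) + dotv nu (w 0%N)
    + (\sum_(k < N) dotv (lv k.+1) (w k.+1 - w k) - h * \sum_(k < N) dotv (lq k.+1) (w k)).
  by rewrite /defect_form; ring.
by rewrite tel /a eqxx (negbTE (lt0n_neq0 N_gt0)) lvN dotvNl GL; ring.
Qed.

Lemma stationary_dir1_tildeE {q v lq lv lam : nat -> 'cV[R]_n} {U1 U2 : nat -> 'cV[R]_m}
    {mu nu : 'cV[R]_n} :
  stationary_dir1 f rho g phi q0 dq0 h alpha gamma N q v lq lv U1 U2 mu nu ->
  (forall k, (1 <= k <= N.-1)%N -> lam k = lv k) ->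
  stationary_tildeE f rho g phi q0 dq0 h alpha gamma N q lam U1 U2 mu nu.
Proof.
move=> st lam_lv dq dlam dU1 dU2 dmu dnu.
have v_vel := stationary_dir1_velocity st.
(* Varying [v] along the linearised dynamics makes all defects vanish to first order. *)
pose dv k := 'D_1 (velocity_curve q dq U1 dU1 U2 dU2 k) 0.
have dJ := st dq dv (fun _ => 0) dlam dU1 dU2 dmu dnu.
have dP := is_derive_penalty q dq v dv lq (fun _ => 0) lv dlam U1 dU1 U2 dU2 nu dnu v_vel.
apply: is_derive_ext (is_derive_eq (is_deriveB dJ dP) _) => [t | ].
  rewrite !fctE /= Jdir1_split addrK; apply: JtildeE_interior => k kN.
  by rewrite /pert lam_lv.
have -> : (fun k => dv k - 'D_1 (velocity_curve q dq U1 dU1 U2 dU2 k) 0) = (fun _ => 0).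
  by apply/funext => k; exact: subrr.
by rewrite sub0r defect_form0 ?oppr0 // -[(0, 0)]/(0 : 'cV[R]_n * 'cV[R]_n) linear0.
Qed.

Lemma stationary_tildeE_dir1 {q lam : nat -> 'cV[R]_n} {U1 U2 : nat -> 'cV[R]_m}
    {mu nu : 'cV[R]_n} :
  stationary_tildeE f rho g phi q0 dq0 h alpha gamma N q lam U1 U2 mu nu ->
  exists v lq lv : nat -> 'cV[R]_n,
    (forall k, (1 <= k <= N.-1)%N -> lv k = lam k) /\
    (forall k, (1 <= k <= N.-1)%N -> lq k.+1 = h^-1 *: (lv k - lv k.+1)) /\
    (forall k, (k < N)%N ->
       v k = Dq q k - (h * alpha * gamma) *: F1 q U1 k
             - (h * (1 - alpha) * (1 - gamma)) *: F2 q U2 k) /\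
    v N = vNplus q U1 U2 /\
    stationary_dir1 f rho g phi q0 dq0 h alpha gamma N q v lq lv U1 U2 mu nu.
Proof.
move=> st; pose v := velocity q U1 U2.
pose L x := 'd (fun p : 'cV[R]_n * 'cV[R]_n => phi p.1 p.2) (q N, v N) (0, x).
have [G GL] : exists G, forall x, dotv G x = L x.
  apply: linear_dotv_repr => [a b | c a]; rewrite /L -?linearD -?linearZ /=.
    by rewrite -[RHS]/('d _ _ (0 + 0, a + b)) addr0.
  by rewrite -[RHS]/('d _ _ (c *: 0, c *: a)) scaler0.
pose lv k := if k == N then - G else lam k.
(* [lv N] is minus the gradient of the terminal cost in [v]; [lq 1] absorbs the multiplier
   [nu] of the initial velocity constraint. *)
pose lq k := if k is k'.+1 then h^-1 *: ((if k' == 0%N then nu else lv k') - lv k) else 0.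
have interior k : (1 <= k <= N.-1)%N -> lv k = lam k.
  by case/andP=> _ kN; rewrite /lv ifN // ltn_eqF // (leq_ltn_trans kN) // ltn_predL.
exists v, lq, lv.
split; [exact: interior | split; [|split; [|split]]].
- by move=> k /andP [k1 _]; rewrite /lq eqn0Ngt k1.
- by move=> k kN; rewrite /v velocityE.
- exact: velocityN.
move=> dq dv dlq dlv dU1 dU2 dmu dnu.
have dJ := st dq dlv dU1 dU2 dmu dnu.
have dP := is_derive_penalty q dq v dv lq dlq lv dlv U1 dU1 U2 dU2 nu dnu (fun k _ => erefl).
apply: is_derive_ext (is_derive_eq (is_deriveD dJ dP) _) => [t | ].
  rewrite !fctE /= Jdir1_split; congr (_ + _); apply: JtildeE_interior => k kN.
  by rewrite /pert interior.
rewrite add0r; apply: (defect_form_adjoint GL) => [|//|k k_gt0].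
  by rewrite /lv eqxx.
by rewrite /lq eqn0Ngt k_gt0.
Qed.

End DiscreteOCP.

Theorem mainTheorem10 (R : realType) (n m : nat)
    (f : 'cV[R]_n -> 'cV[R]_n -> 'cV[R]_n)
    (rho : 'cV[R]_n -> 'M[R]_(n, m))
    (g : 'cV[R]_n -> 'M[R]_m)
    (phi : 'cV[R]_n -> 'cV[R]_n -> R)
    (q0 dq0 : 'cV[R]_n) (T : R) (N : nat) (alpha gamma : R) :
  smooth (fun p : 'cV[R]_n * 'cV[R]_n => f p.1 p.2) ->
  smooth rho ->
  smooth g ->
  (forall q, sym_posdef (g q)) ->
  smooth (fun p : 'cV[R]_n * 'cV[R]_n => phi p.1 p.2) ->
  0 < T -> (0 < N)%N ->
  0 <= alpha <= 1 -> 0 <= gamma <= 1 ->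
  let h := T / N%:R in
  (forall (q v lq lv : nat -> 'cV[R]_n) (U1 U2 : nat -> 'cV[R]_m) (mu nu : 'cV[R]_n),
     stationary_dir1 f rho g phi q0 dq0 h alpha gamma N q v lq lv U1 U2 mu nu ->
     forall lam : nat -> 'cV[R]_n,
       (forall k, (1 <= k <= N.-1)%N -> lam k = lv k) ->
       stationary_tildeE f rho g phi q0 dq0 h alpha gamma N q lam U1 U2 mu nu)
  /\
  (forall (q lam : nat -> 'cV[R]_n) (U1 U2 : nat -> 'cV[R]_m) (mu nu : 'cV[R]_n),
     stationary_tildeE f rho g phi q0 dq0 h alpha gamma N q lam U1 U2 mu nu ->
     exists v lq lv : nat -> 'cV[R]_n,
       (forall k, (1 <= k <= N.-1)%N -> lv k = lam k) /\
       (forall k, (1 <= k <= N.-1)%N -> lq k.+1 = h^-1 *: (lv k - lv k.+1)) /\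
       (forall k, (k < N)%N ->
          v k = Dq h q k - (h * alpha * gamma) *: F1 f rho h gamma q U1 k
                - (h * (1 - alpha) * (1 - gamma)) *: F2 f rho h gamma q U2 k) /\
       v N = vNplus f rho h alpha gamma N q U1 U2 /\
       stationary_dir1 f rho g phi q0 dq0 h alpha gamma N q v lq lv U1 U2 mu nu).
Proof.
move=> f_smooth rho_smooth _ _ phi_smooth T_gt0 N_gt0 _ _ h.
have h_neq0 : h != 0 by rewrite lt0r_neq0 // divr_gt0 // ltr0n.
have f_diff := smooth_differentiable f_smooth.
have rho_diff := smooth_differentiable rho_smooth.
have phi_diff := smooth_differentiable phi_smooth.
split=> [q v lq lv U1 U2 mu nu st lam lam_lv | q lam U1 U2 mu nu st].
- exact: (stationary_dir1_tildeE N_gt0 h_neq0 f_diff rho_diff phi_diff st lam_lv).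
- exact: (stationary_tildeE_dir1 N_gt0 h_neq0 f_diff rho_diff phi_diff st).
Qed.
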